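(* Let $G$ be an affine partial cube with set of antipodes $A(G)$, and let $E_e$ be a $\Theta$-class of $G$. Then $A(\pi_e(G))=\pi_e(A(G))$.
   Context: Hypercube $Q_n$: vertex set $\{+,-\}^n$, adjacency = differing in one coordinate. A partial cube is an isometric subgraph of $Q_n$ with $n$ minimal; its edges split into $\Theta$-classes $E_f$ (edges flipping coordinate $f$), with halfspaces $E_f^{\pm}$ (vertices whose coordinate $f$ is $\pm$). A partial cube is antipodal if with each vertex it contains the vertex with all coordinates flipped. An affine partial cube is a halfspace of an antipodal partial cube. The contraction $\pi_e(G)$ is the graph obtained by contracting all edges of $E_e$ (a vertex is mapped to its sign vector with coordinate $e$ deleted); contractions of affine partial cubes are affine. For a partial cube $G$ and vertices $u,w$, the interval $[u,w]$ is the set of vertices on shortest $u$–$w$ paths. The antipodes $A(G)$ of an affine partial cube $G$ are the vertices $u\in G$ for which there is a vertex $-u\in G$ with $[u,-u]=V(G)$ (equivalently, if $G$ is the halfspace $E_f^+$ of an antipodal $G'$, the vertices of $E_f^+$ incident to an edge of $E_f$). *)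

From mathcomp Require Import all_boot.
Set Implicit Arguments. Unset Strict Implicit. Unset Printing Implicit Defensive.

(* Vertices of the hypercube Q_n: sign vectors, + = true, - = false. *)
Notation vert n := {ffun 'I_n -> bool}.

Definition hamming n (x y : vert n) : nat := #|[set i | x i != y i]|.

Definition negv n (x : vert n) : vert n := [ffun i => ~~ x i].

Definition adjV n (V : {set vert n}) : rel (vert n) :=
  fun a b => (b \in V) && (hamming a b == 1).

Definition walk n (V : {set vert n}) (x : vert n) (p : seq (vert n)) : bool :=
  (x \in V) && path (adjV V) x p.

Definition gdist n (V : {set vert n}) (x y : vert n) (k : nat) : Prop :=
  (exists p, [/\ walk V x p, last x p = y & size p = k]) /\
  (forall p, walk V x p -> last x p = y -> k <= size p).

Definition in_interval n (V : {set vert n}) (u w x : vert n) : Prop :=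
  exists a b, [/\ gdist V u x a, gdist V x w b & gdist V u w (a + b)].

(* V is (the vertex set of) a partial cube isometrically embedded in Q_n
   with n minimal: nonempty, isometric, every coordinate non-constant. *)
Definition partial_cube n (V : {set vert n}) : Prop :=
  [/\ V != set0,
      (forall x y, x \in V -> y \in V -> gdist V x y (hamming x y))
    & (forall i : 'I_n, exists x y, [/\ x \in V, y \in V & x i != y i])].

Definition antipodal n (V : {set vert n}) : Prop :=
  forall x, x \in V -> negv x \in V.

Definition delete m (e : 'I_m.+1) (v : vert m.+1) : vert m :=
  [ffun i => v (lift e i)].

Definition contract m (e : 'I_m.+1) (V : {set vert m.+1}) : {set vert m} :=
  [set delete e v | v in V].

(* V is an affine partial cube: (a partial cube that is) the halfspace E_f^+
   of an antipodal partial cube V' in Q_{n+1}, with the (now constant)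
   coordinate f deleted. *)
Definition affine_pc n (V : {set vert n}) : Prop :=
  partial_cube V /\
  exists (f : 'I_n.+1) (V' : {set vert n.+1}),
    [/\ partial_cube V', antipodal V' & V = [set delete f v | v in V' & v f]].

Definition is_antipode n (V : {set vert n}) (u : vert n) : Prop :=
  [/\ u \in V, negv u \in V & forall x, x \in V <-> in_interval V u (negv u) x].

(* An antipode of an isometric subgraph of Q_n is just a vertex u with -u also
   in the graph, since then every vertex lies on a u-(-u) geodesic.  Contraction
   keeps the graph isometric, so antipodes project to antipodes.  Conversely,
   let v and -v lie in pi_e(G) with G the halfspace E_f^+ of an antipodal V'.
   Lifts a, b of v, -v either already form an antipodal pair of G, or agree at
   e; then the lifts A, B of a, b to V' and the vertex -B of V' differ in
   exactly the two coordinates f and e, and the midpoint M of a geodesic from A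
   to -B yields the required antipodal pair: either M itself lies in E_f^+, or
   its antipode -M does. *)
From mathcomp Require Import all_boot.
From mathcomp Require Import zify.
Set Implicit Arguments. Unset Strict Implicit. Unset Printing Implicit Defensive.

Lemma hammingE n (x y : vert n) : hamming x y = \sum_i (x i != y i : nat).
Proof.
rewrite /hamming -sum1_card big_mkcond /=; apply: eq_bigr => i _.
by rewrite inE; case: (x i != y i).
Qed.

Lemma hamming_sym n (x y : vert n) : hamming x y = hamming y x.
Proof. by rewrite !hammingE; apply: eq_bigr => i _; rewrite eq_sym. Qed.

Lemma hammingxx n (x : vert n) : hamming x x = 0.
Proof. by rewrite hammingE big1 // => i _; rewrite eqxx. Qed.

Lemma hamming_eq0 n (x y : vert n) : hamming x y = 0 -> x = y.
Proof.
rewrite hammingE => /eqP; rewrite sum_nat_eq0 => /forallP xy.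
by apply/ffunP => i; move: (xy i); case: (x i); case: (y i).
Qed.

Lemma leq_hamming_trans n (x y z : vert n) :
  hamming x z <= hamming x y + hamming y z.
Proof.
rewrite !hammingE -big_split; apply: leq_sum => i _.
by case: (x i); case: (y i); case: (z i).
Qed.

Lemma hamming_negv n (u x : vert n) :
  hamming u x + hamming x (negv u) = hamming u (negv u).
Proof.
rewrite !hammingE -big_split; apply: eq_bigr => i _; rewrite !ffunE.
by case: (u i); case: (x i).
Qed.

Lemma negvK n : involutive (@negv n).
Proof. by move=> x; apply/ffunP => i; rewrite !ffunE negbK. Qed.

Lemma delete_negv m (e : 'I_m.+1) (x : vert m.+1) :
  delete e (negv x) = negv (delete e x).
Proof. by apply/ffunP => i; rewrite !ffunE. Qed.

Lemma hamming_delete m (e : 'I_m.+1) (x y : vert m.+1) :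
  hamming x y = (x e != y e) + hamming (delete e x) (delete e y).
Proof.
rewrite !hammingE (bigD1_ord e) //=; congr (_ + _); apply: eq_bigr => i _.
by rewrite !ffunE.
Qed.

Lemma eq_delete m (e : 'I_m.+1) (x y : vert m.+1) :
  delete e x = delete e y -> x e = y e -> x = y.
Proof.
move=> xy_e xy; apply: hamming_eq0.
by rewrite (hamming_delete e) xy_e xy eqxx hammingxx.
Qed.

Lemma hamming_delete2 m (f : 'I_m.+2) (e : 'I_m.+1) (x y : vert m.+2) :
  hamming x y = (x f != y f) + ((x (lift f e) != y (lift f e)) +
     hamming (delete e (delete f x)) (delete e (delete f y))).
Proof. by rewrite (hamming_delete f) (hamming_delete e) !ffunE. Qed.

(* The last conjunct says that y flips exactly one of the coordinates f and
   lift f e of x. *)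
Lemma square_midpoint m (f : 'I_m.+2) (e : 'I_m.+1) (x y z : vert m.+2) :
  delete e (delete f x) = delete e (delete f z) ->
  x f != z f -> x (lift f e) != z (lift f e) ->
  hamming x y = 1 -> hamming y z = 1 ->
  delete e (delete f y) = delete e (delete f x) /\
  (y f == x f) = (y (lift f e) != x (lift f e)).
Proof.
move=> dd_xz xz_f xz_e; rewrite !(hamming_delete2 f e) -dd_xz.
rewrite (hamming_sym (delete e _)).
set h := hamming _ _; move: xz_f xz_e.
case: (x f); case: (z f); case: (y f);
  case: (x (lift f e)); case: (z (lift f e)); case: (y (lift f e)) => //= _ _ xy yz.
all: have h0 : h = 0 by lia.
all: by split; [exact: hamming_eq0 | move: xy yz; rewrite h0].
Qed.

Lemma walk_last_in n (W : {set vert n}) x p : walk W x p -> last x p \in W.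
Proof.
elim: p x => [|y p IHp] x /=; first by case/andP.
by case/andP=> _ /andP[/andP[Wy _] yp]; apply: IHp; rewrite /walk Wy.
Qed.

Lemma hamming_le_walk n (W : {set vert n}) x p :
  walk W x p -> hamming x (last x p) <= size p.
Proof.
elim: p x => [|y p IHp] x /=; first by rewrite hammingxx.
case/andP=> _ /andP[/andP[Wy /eqP xy] yp].
apply: leq_trans (leq_hamming_trans x y _) _; rewrite xy add1n ltnS.
by apply: IHp; rewrite /walk Wy.
Qed.

Lemma gdist_walk n (W : {set vert n}) x p :
  walk W x p -> size p <= hamming x (last x p) ->
  gdist W x (last x p) (hamming x (last x p)).
Proof.
move=> Wp le_p; split=> [|q Wq <-]; last exact: hamming_le_walk Wq.
by exists p; split=> //; apply/eqP; rewrite eqn_leq le_p (hamming_le_walk Wp).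
Qed.

Lemma gdist2_midpoint n (W : {set vert n}) x y :
  gdist W x y 2 ->
  exists z, [/\ z \in W, hamming x z = 1 & hamming z y = 1].
Proof.
case=> [[p [Wp <- size_p]] _].
case: p Wp size_p => [|z [|y' [|]]] //=.
by case/and3P=> _ /andP[Wz /eqP xz] /andP[/andP[_ /eqP zy] _]; exists z.
Qed.

Definition isometric n (W : {set vert n}) : Prop :=
  {in W &, forall x y, gdist W x y (hamming x y)}.

Lemma isometric_antipode n (W : {set vert n}) u :
  isometric W -> u \in W -> negv u \in W -> is_antipode W u.
Proof.
move=> isoW Wu Wnu; split=> // x; split=> [Wx|].
  exists (hamming u x), (hamming x (negv u)).
  by rewrite hamming_negv; split; apply: isoW.
by case=> a [b [[[p [Wp <- _]] _] _ _]]; apply: walk_last_in Wp.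
Qed.

Section Contraction.

Variables (m : nat) (e : 'I_m.+1) (V : {set vert m.+1}).

(* Steps along coordinate e collapse, and a walk that changes coordinate e
   between its ends contains at least one such step. *)
Lemma walk_contract a p : walk V a p ->
  exists q, [/\ walk (contract e V) (delete e a) q,
    last (delete e a) q = delete e (last a p) &
    size q + (a e != last a p e) <= size p].
Proof.
elim: p a => [|y p IHp] a /=.
  case/andP=> Va _; exists [::]; split=> //=; last by rewrite eqxx.
  by rewrite /walk /= andbT imset_f.
case/andP=> Va /andP[/andP[Vy /eqP ay] yp].
have [q [Wq <- le_q]] : exists q, [/\ walk (contract e V) (delete e y) q,
    last (delete e y) q = delete e (last y p) &
    size q + (y e != last y p e) <= size p] by apply: IHp; rewrite /walk Vy.
move: ay; rewrite (hamming_delete e).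
have [ay_e|ay_e] := eqVneq (a e) (y e); rewrite /= ?add0n ?add1n => ay.
  exists (delete e y :: q); split=> //=; last by rewrite ay_e.
  by rewrite /walk /= imset_f //= /adjV ay eqxx; case/andP: Wq => -> ->.
move/succn_inj/hamming_eq0: ay => ->; exists q; split=> //.
by move: le_q ay_e; case: (a e); case: (y e); case: (last y p e) => //=; lia.
Qed.

Lemma isometric_contract : isometric V -> isometric (contract e V).
Proof.
move=> isoV _ _ /imsetP[a Va ->] /imsetP[b Vb ->].
have [[p [Vp pb lt_p]] _] := isoV a b Va Vb.
have [q [Wq qb le_q]] := walk_contract Vp.
rewrite pb in qb le_q; rewrite -qb; apply: gdist_walk => //.
by rewrite qb; move: le_q; rewrite lt_p (hamming_delete e a b); lia.
Qed.

End Contraction.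

Section Halfspace.

Variables (m : nat) (f : 'I_m.+2) (e : 'I_m.+1) (V' : {set vert m.+2}).
Hypotheses (isoV' : isometric V') (antiV' : antipodal V').

Let H := [set delete f w | w in V' & w f].

Lemma halfspace_contract_antipodal_pair x :
  x \in contract e H -> negv x \in contract e H ->
  exists u, [/\ u \in H, negv u \in H & delete e u = x].
Proof.
case/imsetP=> a Ha xa; case/imsetP=> b Hb nxb.
have [ab_e|ab_e] := eqVneq (a e) (b e); last first.
  exists a; split=> //; suff -> : negv a = b by [].
  apply: (eq_delete (e := e)); first by rewrite delete_negv -xa.
  by rewrite ffunE; move: ab_e; case: (a e); case: (b e).
case/imsetP: (Ha) => A; rewrite inE => /andP[V'A Af] aA.
case/imsetP: (Hb) => B; rewrite inE => /andP[V'B Bf] bB.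
have A_e : A (lift f e) = a e by rewrite aA ffunE.
have nB_e : negv B (lift f e) = ~~ a e by rewrite ab_e bB !ffunE.
have nB_f : negv B f = false by rewrite ffunE Bf.
have dd_A : delete e (delete f A) = x by rewrite -aA.
have dd_nB : delete e (delete f (negv B)) = x.
  by rewrite !delete_negv -bB -nxb negvK.
have AnB : hamming A (negv B) = 2.
  by rewrite (hamming_delete2 f e) dd_A dd_nB hammingxx A_e nB_e nB_f Af; case: (a e).
have := isoV' V'A (antiV' V'B); rewrite AnB => /gdist2_midpoint[M [V'M AM MnB]].
have [|||] := square_midpoint (f := f) (e := e) _ _ _ AM MnB.
- by rewrite dd_A dd_nB.
- by rewrite Af nB_f.
- by rewrite A_e nB_e; case: (a e).
rewrite dd_A Af A_e => dd_M; case Mf: (M f) => /= M_e.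
- exists (delete f M); split; last by rewrite dd_M.
  + by apply: imset_f; rewrite inE V'M Mf.
  + suff -> : negv (delete f M) = b by [].
    apply: (eq_delete (e := e)); first by rewrite delete_negv dd_M nxb.
    by rewrite !ffunE -ab_e; move: M_e; case: (M _); case: (a e).
- exists a; split=> //; suff -> : negv a = delete f (negv M).
    by apply: imset_f; rewrite inE antiV' //= ffunE Mf.
  rewrite delete_negv; congr negv; apply: (eq_delete (e := e)).
    by rewrite dd_M xa.
  by rewrite ffunE; move: M_e; case: (M _); case: (a e).
Qed.

End Halfspace.

Theorem mainTheorem18 (m : nat) (V : {set {ffun 'I_m.+1 -> bool}})
    (e : 'I_m.+1) :
  affine_pc V ->
  forall v : {ffun 'I_m -> bool},
    is_antipode (contract e V) v <->
    (exists u, is_antipode V u /\ delete e u = v).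
Proof.
move=> [[_ isoV _] [f [V' [[_ isoV' _] antiV' defV]]]]; subst V => v; split.
  case=> Wv Wnv _.
  have [u [Hu Hnu <-]] := halfspace_contract_antipodal_pair isoV' antiV' Wv Wnv.
  by exists u; split=> //; apply: isometric_antipode isoV Hu Hnu.
case=> u [[Hu Hnu _] <-]; apply: isometric_antipode.
- exact: isometric_contract isoV.
- exact: imset_f.
- by rewrite -delete_negv imset_f.
Qed.
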